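(* Let $P$ be a poset such that $\Sigma P$ is an $\omega$ type space. Then $\Sigma\sigma(P)$ is sober.
   Context: For a poset $P$, $\sigma(P)$ is the set of Scott open subsets of $P$ (a set $U$ is Scott open iff it is an upper set and for every directed $D$ whose supremum exists, $\bigvee D\in U$ implies $D\cap U\neq\emptyset$), $\Sigma P=(P,\sigma(P))$, and $\Sigma\sigma(P)$ is the poset $(\sigma(P),\subseteq)$ with its Scott topology. A topological space is an $\omega$ type space if it has a subbase consisting of countable subsets. A $T_0$ space is sober if every irreducible closed set equals $\overline{\{x\}}$ for some point $x$. *)

From Stdlib Require Import List.

Record poset := Poset {
  carrier :> Type;
  le : carrier -> carrier -> Prop;
  le_refl : forall x, le x x;
  le_trans : forall x y z, le x y -> le y z -> le x z;
  le_antisym : forall x y, le x y -> le y x -> x = y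
}.

Section OrderNotions.
Variables (X : Type) (le : X -> X -> Prop).

Definition upper_set (U : X -> Prop) : Prop :=
  forall x y, le x y -> U x -> U y.

Definition directed (D : X -> Prop) : Prop :=
  (exists x, D x) /\
  forall x y, D x -> D y -> exists z, D z /\ le x z /\ le y z.

Definition is_sup (D : X -> Prop) (s : X) : Prop :=
  (forall d, D d -> le d s) /\
  (forall u, (forall d, D d -> le d u) -> le s u).

Definition scott_open (U : X -> Prop) : Prop :=
  upper_set U /\
  forall (D : X -> Prop) (s : X), directed D -> is_sup D s -> U s ->
    exists d, D d /\ U d.
End OrderNotions.

Definition sigmaP (P : poset) : Type := { U : P -> Prop | @scott_open (carrier P) (@le P) U }.

Definition sigma_le (P : poset) (U V : sigmaP P) : Prop :=
  forall x, proj1_sig U x -> proj1_sig V x.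

Section TopNotions.
Variables (X : Type) (tau : (X -> Prop) -> Prop).

Definition closed (C : X -> Prop) : Prop := tau (fun x => ~ C x).

Definition closure (A : X -> Prop) (y : X) : Prop :=
  forall F, closed F -> (forall x, A x -> F x) -> F y.

Definition T0 : Prop :=
  forall x y, (forall U, tau U -> (U x <-> U y)) -> x = y.

Definition irreducible_closed (C : X -> Prop) : Prop :=
  closed C /\ (exists x, C x) /\
  forall A B, closed A -> closed B -> (forall x, C x -> A x \/ B x) ->
    (forall x, C x -> A x) \/ (forall x, C x -> B x).

Definition sober : Prop :=
  T0 /\ forall C, irreducible_closed C ->
    exists x, forall y, C y <-> closure (fun z => z = x) y.

Definition is_subbase (S : (X -> Prop) -> Prop) : Prop :=
  (forall A, S A -> tau A) /\
  forall U, tau U -> forall x, U x ->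
    exists l : list (X -> Prop),
      Forall (fun A => S A /\ A x) l /\
      (forall y, Forall (fun A => A y) l -> U y).

Definition countable_set (A : X -> Prop) : Prop :=
  exists f : X -> nat, forall x y, A x -> A y -> f x = f y -> x = y.

Definition omega_type : Prop :=
  exists S, is_subbase S /\ forall A, S A -> countable_set A.
End TopNotions.

From Stdlib Require Import List Lia Classical ClassicalEpsilon
  FunctionalExtensionality PropExtensionality ProofIrrelevance.

(* The Scott topology of a poset is T0 and the closure of a point is its
   principal ideal, so sobriety of Σσ(P) amounts to: every irreducible
   Scott-closed family C of Scott-open sets contains the union W of its
   members.  By the ω hypothesis, W is the directed union of its countable
   Scott-open subsets, so it is enough that every countable Scott-open B ⊆ W
   belongs to C.  Enumerate B; irreducibility yields V_n ∈ C containing the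
   first n points of B.  The sets T_k = B ∩ ⋂_{l ≥ k} V_l are Scott open,
   because a point of B lies in all V_l from some index on, leaving only
   finitely many conditions to meet along a directed set.  They increase to
   B and T_k ⊆ V_k ∈ C, so B ∈ C since C is Scott closed. *)

Lemma countable_set_sub (X : Type) (A B : X -> Prop) :
  countable_set X A -> (forall x, B x -> A x) -> countable_set X B.
Proof.
  intros [f finj] HBA. exists f. intros x y Bx By. apply finj; auto.
Qed.

Lemma countable_set_union (X : Type) (A B : X -> Prop) :
  countable_set X A -> countable_set X B -> countable_set X (fun x => A x \/ B x).
Proof.
  intros [fa Ha] [fb Hb].
  exists (fun x => if excluded_middle_informative (A x) then 2 * fa x else S (2 * fb x)).
  intros x y Hx Hy E.
  destruct (excluded_middle_informative (A x)) as [Ax|nAx];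
  destruct (excluded_middle_informative (A y)) as [Ay|nAy].
  - apply Ha; auto; lia.
  - exfalso; lia.
  - exfalso; lia.
  - apply Hb; [destruct Hx; tauto | destruct Hy; tauto | lia].
Qed.

Lemma subbase_covers_point (X : Type) (tau S : (X -> Prop) -> Prop) (U : X -> Prop) (x : X) :
  is_subbase X tau S -> tau U -> U x -> ~ (forall y, U y) -> exists A, S A /\ A x.
Proof.
  intros [_ HSb] HU Ux Hnfull.
  destruct (HSb U HU x Ux) as [[|A l] [Hl Hsub]].
  - exfalso. apply Hnfull. intro y. apply Hsub. constructor.
  - exists A. exact (Forall_inv Hl).
Qed.

Section ScottTopology.
Variables (X : Type) (le : X -> X -> Prop).
Local Notation open := (scott_open X le).

Lemma scott_open_ext (U V : X -> Prop) :
  (forall x, U x <-> V x) -> open U -> open V.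
Proof.
  intros H [Hu Hd]. split.
  - intros x y Hxy Vx. apply H. apply (Hu x y Hxy). apply H. exact Vx.
  - intros D s HD Hs Vs. destruct (Hd D s HD Hs (proj2 (H s) Vs)) as [d [Dd Ud]].
    exists d. split; [exact Dd | apply H; exact Ud].
Qed.

Lemma scott_open_full : open (fun _ => True).
Proof.
  split.
  - intros x y _ _. exact I.
  - intros D s [[d Dd] _] _ _. exists d. split; [exact Dd | exact I].
Qed.

Lemma scott_open_empty : open (fun _ => False).
Proof. split; [intros x y _ [] | intros D s _ _ []]. Qed.

Lemma scott_open_inter (U V : X -> Prop) :
  open U -> open V -> open (fun x => U x /\ V x).
Proof.
  intros [Uu Ud] [Vu Vd]. split.
  - intros x y Hxy [Ux Vx]. split; eauto.
  - intros D s HD Hs [Us Vs].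
    destruct (Ud D s HD Hs Us) as [d1 [D1 U1]].
    destruct (Vd D s HD Hs Vs) as [d2 [D2 V2]].
    destruct (proj2 HD d1 d2 D1 D2) as [d [Dd [l1 l2]]].
    exists d. split; [exact Dd | split; eauto].
Qed.

Lemma scott_open_union (U V : X -> Prop) :
  open U -> open V -> open (fun x => U x \/ V x).
Proof.
  intros [Uu Ud] [Vu Vd]. split.
  - intros x y Hxy [Ux|Vx]; [left|right]; eauto.
  - intros D s HD Hs [Us|Vs].
    + destruct (Ud D s HD Hs Us) as [d [Dd Ux]]. exists d; auto.
    + destruct (Vd D s HD Hs Vs) as [d [Dd Vx]]. exists d; auto.
Qed.

Lemma scott_open_bigcup (I : Type) (D : I -> Prop) (O : I -> X -> Prop) :
  (forall i, D i -> open (O i)) -> open (fun x => exists i, D i /\ O i x).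
Proof.
  intro HO. split.
  - intros x y Hxy [i [Di Oix]]. exists i. split; [exact Di | exact (proj1 (HO i Di) x y Hxy Oix)].
  - intros E s HE Hs [i [Di Ois]].
    destruct (proj2 (HO i Di) E s HE Hs Ois) as [e [Ee Oie]].
    exists e. split; [exact Ee | exists i; auto].
Qed.

Lemma scott_open_bigcap_list (I : Type) (l : list I) (O : I -> X -> Prop) :
  (forall i, In i l -> open (O i)) -> open (fun x => forall i, In i l -> O i x).
Proof.
  induction l as [|i l IH]; intro HO.
  - apply (scott_open_ext (fun _ => True)); [simpl; tauto | apply scott_open_full].
  - apply (scott_open_ext (fun x => O i x /\ forall j, In j l -> O j x)).
    + intro x. simpl. split.
      * intros [Hi Hl] j [<- | Hj]; auto.
      * intro H. split; [apply H; left; reflexivity | intros j Hj; apply H; right; exact Hj].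
    + apply scott_open_inter.
      * apply HO. left. reflexivity.
      * apply IH. intros j Hj. apply HO. right. exact Hj.
Qed.

Lemma scott_open_eventually_in (B : X -> Prop) (V : nat -> X -> Prop) (f : X -> nat) (k : nat) :
  open B -> (forall l, open (V l)) ->
  (forall l x, B x -> f x < l -> V l x) ->
  open (fun x => B x /\ forall l, k <= l -> V l x).
Proof.
  intros HB HV Hinit. split.
  - intros x y Hxy [Bx Vx]. split; [exact (proj1 HB x y Hxy Bx) |].
    intros l Hl. exact (proj1 (HV l) x y Hxy (Vx l Hl)).
  - intros D s HD Hs [Bs Vs].
    destruct (proj2 HB D s HD Hs Bs) as [d0 [Dd0 Bd0]].
    set (N := S (f d0)).
    assert (Hmid : open (fun x => forall l, In l (seq k (N - k)) -> V l x)).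
    { apply scott_open_bigcap_list. intros l _. apply HV. }
    destruct (proj2 Hmid D s HD Hs) as [d1 [Dd1 Vd1]].
    { intros l Hl. apply in_seq in Hl. apply Vs. lia. }
    destruct (proj2 HD d0 d1 Dd0 Dd1) as [d [Dd [Hd0 Hd1]]].
    exists d. split; [exact Dd | split].
    + exact (proj1 HB d0 d Hd0 Bd0).
    + intros l Hl. destruct (Compare_dec.le_lt_dec N l) as [HNl | HlN].
      * apply (proj1 (HV l) d0 d Hd0). apply Hinit; [exact Bd0 | unfold N in HNl; lia].
      * apply (proj1 (HV l) d1 d Hd1). apply Vd1. apply in_seq. lia.
Qed.

Lemma scott_closed_lower (C : X -> Prop) :
  closed X open C -> forall x y, le x y -> C y -> C x.
Proof.
  intros HC x y Hxy Cy. apply NNPP. intro nCx. exact (proj1 HC x y Hxy nCx Cy).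
Qed.

Lemma scott_closed_directed_sup (C D : X -> Prop) (s : X) :
  closed X open C -> directed X le D -> is_sup X le D s ->
  (forall d, D d -> C d) -> C s.
Proof.
  intros HC HD Hs HDC. apply NNPP. intro nCs.
  destruct (proj2 HC D s HD Hs nCs) as [d [Dd nCd]].
  exact (nCd (HDC d Dd)).
Qed.

Lemma directed_monotone_range (u : nat -> X) :
  (forall m n, m <= n -> le (u m) (u n)) -> directed X le (fun x => exists n, x = u n).
Proof.
  intro Hu. split; [exists (u 0); exists 0; reflexivity |].
  intros x y [m ->] [n ->]. exists (u (Nat.max m n)).
  split; [eexists; reflexivity | split; apply Hu; lia].
Qed.

Lemma irreducible_meets_inter (C O1 O2 : X -> Prop) :
  irreducible_closed X open C -> open O1 -> open O2 ->
  (exists x, C x /\ O1 x) -> (exists x, C x /\ O2 x) ->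
  exists x, C x /\ O1 x /\ O2 x.
Proof.
  intros [_ [_ Hirr]] HO1 HO2 [x1 [Cx1 O1x1]] [x2 [Cx2 O2x2]].
  apply NNPP. intro Hnone.
  assert (Hcl : forall O, open O -> closed X open (fun x => ~ O x)).
  { intros O HO. unfold closed.
    apply (scott_open_ext O); [intro x; split; [tauto | apply NNPP] | exact HO]. }
  destruct (Hirr _ _ (Hcl O1 HO1) (Hcl O2 HO2)) as [H|H].
  - intros x Cx. apply not_and_or. intros [O1x O2x]. apply Hnone. eauto.
  - exact (H x1 Cx1 O1x1).
  - exact (H x2 Cx2 O2x2).
Qed.

Lemma irreducible_meets_bigcap_list (I : Type) (C : X -> Prop) (l : list I) (O : I -> X -> Prop) :
  irreducible_closed X open C ->
  (forall i, In i l -> open (O i) /\ exists x, C x /\ O i x) ->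
  exists x, C x /\ forall i, In i l -> O i x.
Proof.
  intro HC. induction l as [|i l IH]; intro HO.
  - destruct HC as [_ [[x Cx] _]]. exists x. split; [exact Cx | intros i []].
  - destruct (irreducible_meets_inter C (O i) (fun x => forall j, In j l -> O j x))
      as [x [Cx [Oix Olx]]].
    + exact HC.
    + apply HO. left. reflexivity.
    + apply scott_open_bigcap_list. intros j Hj. apply HO. right. exact Hj.
    + apply HO. left. reflexivity.
    + apply IH. intros j Hj. apply HO. right. exact Hj.
    + exists x. split; [exact Cx |]. intros j [<- | Hj]; auto.
Qed.

Lemma countable_open_nbhd (S : (X -> Prop) -> Prop) (A U : X -> Prop) (x : X) :
  is_subbase X open S -> (forall A, S A -> countable_set X A) ->
  S A -> A x -> open U -> U x ->
  exists V, open V /\ countable_set X V /\ V x /\ forall y, V y -> U y.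
Proof.
  intros [HSo HSb] HSc SA Ax HU Ux.
  destruct (HSb U HU x Ux) as [l [Hl Hsub]]. rewrite Forall_forall in Hl.
  exists (fun y => A y /\ forall B, In B l -> B y). split; [| split; [| split]].
  - apply scott_open_inter; [exact (HSo A SA) |].
    apply scott_open_bigcap_list. intros B HB. exact (HSo B (proj1 (Hl B HB))).
  - apply (countable_set_sub X A); [exact (HSc A SA) | tauto].
  - split; [exact Ax |]. intros B HB. exact (proj2 (Hl B HB)).
  - intros y [_ Hy]. apply Hsub. rewrite Forall_forall. exact Hy.
Qed.

End ScottTopology.

Section ScottPoset.
Variable P : poset.
Local Notation open := (scott_open P (@le P)).

Lemma scott_open_not_below (y : P) : open (fun x => ~ le P x y).
Proof.
  split.
  - intros x x' Hxx' nx Hx'. apply nx. exact (le_trans P x x' y Hxx' Hx').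
  - intros D s HD [_ Hlub] ns. apply NNPP. intro Hnone. apply ns. apply Hlub.
    intros d Dd. apply NNPP. intro nd. apply Hnone. exists d. auto.
Qed.

Lemma scott_T0 : T0 P open.
Proof.
  intros x y Hxy. apply le_antisym.
  - apply NNPP. intro nxy.
    apply (proj1 (Hxy _ (scott_open_not_below y)) nxy). apply le_refl.
  - apply NNPP. intro nyx.
    apply (proj2 (Hxy _ (scott_open_not_below x)) nyx). apply le_refl.
Qed.

Lemma scott_closure_point (x y : P) : closure P open (fun z => z = x) y <-> le P y x.
Proof.
  split.
  - intro Hy. apply (Hy (fun z => le P z x)).
    + exact (scott_open_not_below x).
    + intros z ->. apply le_refl.
  - intros Hyx F HF HxF. apply (scott_closed_lower P (@le P) F HF y x Hyx).
    apply HxF. reflexivity.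
Qed.

Lemma scott_sober_of_greatest :
  (forall C, irreducible_closed P open C -> exists w, C w /\ forall y, C y -> le P y w) ->
  sober P open.
Proof.
  intro Hgreatest. split; [exact scott_T0 |].
  intros C HC. destruct (Hgreatest C HC) as [w [Cw Hw]].
  exists w. intro y. split.
  - intro Cy. apply scott_closure_point. exact (Hw y Cy).
  - intro Hy. apply scott_closure_point in Hy.
    exact (scott_closed_lower P (@le P) C (proj1 HC) y w Hy Cw).
Qed.

End ScottPoset.

Section ScottOpenSets.
Variable P : poset.
Local Notation sigma_open := (scott_open (sigmaP P) (sigma_le P)).

Lemma sigma_le_antisym (U V : sigmaP P) : sigma_le P U V -> sigma_le P V U -> U = V.
Proof.
  destruct U as [U HU], V as [V HV]. unfold sigma_le. simpl. intros HUV HVU.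
  assert (U = V) as <-.
  { apply functional_extensionality. intro x.
    apply propositional_extensionality. split; auto. }
  f_equal. apply proof_irrelevance.
Qed.

Definition sigma_poset : poset :=
  {| carrier := sigmaP P;
     le := sigma_le P;
     le_refl := fun U x Ux => Ux;
     le_trans := fun U V W HUV HVW x Ux => HVW x (HUV x Ux);
     le_antisym := sigma_le_antisym |}.

Definition sigma_bigcup (D : sigmaP P -> Prop) : sigmaP P :=
  exist _ (fun x => exists U, D U /\ proj1_sig U x)
    (scott_open_bigcup P (@le P) _ D (@proj1_sig _ _) (fun U _ => proj2_sig U)).

Lemma is_sup_sigma (D : sigmaP P -> Prop) (s : sigmaP P) :
  (forall x, proj1_sig s x <-> exists U, D U /\ proj1_sig U x) ->
  is_sup (sigmaP P) (sigma_le P) D s.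
Proof.
  intro Hs. split.
  - intros U DU x Ux. apply Hs. eauto.
  - intros V HV x sx. destruct (proj1 (Hs x) sx) as [U [DU Ux]]. exact (HV U DU x Ux).
Qed.

Lemma sigma_sup_bigcup (D : sigmaP P -> Prop) (s : sigmaP P) :
  is_sup (sigmaP P) (sigma_le P) D s ->
  forall x, proj1_sig s x -> exists U, D U /\ proj1_sig U x.
Proof.
  intros [_ Hlub] x sx.
  exact (Hlub (sigma_bigcup D) (fun U DU y Uy => ex_intro _ U (conj DU Uy)) x sx).
Qed.

Lemma sigma_open_mem (x : P) : sigma_open (fun U => proj1_sig U x).
Proof.
  split.
  - intros U V HUV Ux. exact (HUV x Ux).
  - intros D s _ Hs sx. exact (sigma_sup_bigcup D s Hs x sx).
Qed.

Lemma sigma_countable_below_directed (W : sigmaP P) :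
  directed (sigmaP P) (sigma_le P)
    (fun U => sigma_le P U W /\ countable_set P (proj1_sig U)).
Proof.
  split.
  - exists (exist _ _ (scott_open_empty P (@le P))). simpl.
    split; [intros x [] | exists (fun _ => 0); intros x y []].
  - intros U1 U2 [HU1 CU1] [HU2 CU2].
    exists (exist _ _ (scott_open_union P (@le P) _ _ (proj2_sig U1) (proj2_sig U2))).
    simpl. split; [split | split].
    + intros x [Hx|Hx]; auto.
    + apply countable_set_union; assumption.
    + intros x Hx. left. exact Hx.
    + intros x Hx. right. exact Hx.
Qed.

Lemma irreducible_contains_initial_segments
  (C : sigmaP P -> Prop) (B : P -> Prop) (f : P -> nat) :
  irreducible_closed _ sigma_open C ->
  (forall x y, B x -> B y -> f x = f y -> x = y) ->
  (forall x, B x -> exists U, C U /\ proj1_sig U x) ->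
  forall n, exists U, C U /\ forall x, B x -> f x < n -> proj1_sig U x.
Proof.
  intros HC finj HB n.
  set (level := fun k (U : sigmaP P) => forall x, B x -> f x = k -> proj1_sig U x).
  destruct (irreducible_meets_bigcap_list _ _ _ C (seq 0 n) level HC) as [U [CU HU]].
  - intros k _. destruct (classic (exists x, B x /\ f x = k)) as [[x [Bx fx]] | Hnone].
    + assert (Hlevel : forall U, proj1_sig U x <-> level k U).
      { intro U. split.
        - intros Ux y By fy. replace y with x; [exact Ux |]. apply finj; congruence.
        - intro H. apply H; assumption. }
      split.
      * apply (scott_open_ext _ _ (fun U => proj1_sig U x)); [exact Hlevel | apply sigma_open_mem].
      * destruct (HB x Bx) as [U [CU Ux]]. exists U. split; [exact CU | apply Hlevel; exact Ux].
    + assert (Hlevel : forall U, level k U).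
      { intros U y By fy. exfalso. apply Hnone. exists y. split; assumption. }
      split.
      * apply (scott_open_ext _ _ (fun _ => True)); [intro U; split; auto | apply scott_open_full].
      * destruct HC as [_ [[U CU] _]]. exists U. split; auto.
  - exists U. split; [exact CU |]. intros x Bx fx.
    apply (HU (f x)); [apply in_seq; lia | exact Bx | reflexivity].
Qed.

Lemma irreducible_mem_of_countable (C : sigmaP P -> Prop) (B : sigmaP P) :
  irreducible_closed _ sigma_open C -> countable_set P (proj1_sig B) ->
  (forall x, proj1_sig B x -> exists U, C U /\ proj1_sig U x) -> C B.
Proof.
  intros HC [f finj] HB.
  destruct (choice _ (irreducible_contains_initial_segments C (proj1_sig B) f HC finj HB))
    as [V HV].
  set (T := fun k x => proj1_sig B x /\ forall l, k <= l -> proj1_sig (V l) x).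
  assert (HT : forall k, scott_open P (@le P) (T k)).
  { intro k. apply (scott_open_eventually_in P (@le P) _ (fun l => proj1_sig (V l)) f).
    - exact (proj2_sig B).
    - intro l. exact (proj2_sig (V l)).
    - intros l x Bx fx. exact (proj2 (HV l) x Bx fx). }
  set (t := fun k => exist _ (T k) (HT k) : sigmaP P).
  apply (scott_closed_directed_sup _ _ C (fun U => exists k, U = t k) B (proj1 HC)).
  - apply directed_monotone_range.
    intros m n Hmn x [Bx Hx]. split; [exact Bx | intros l Hl; apply Hx; lia].
  - apply is_sup_sigma. intro x. split.
    + intro Bx. exists (t (S (f x))). split; [eexists; reflexivity |].
      split; [exact Bx | intros l Hl; apply (proj2 (HV l)); [exact Bx | lia]].
    + intros [U [[k ->] [Bx _]]]. exact Bx.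
  - intros U [k ->].
    apply (scott_closed_lower _ _ C (proj1 HC) (t k) (V k)); [| exact (proj1 (HV k))].
    intros x [_ Hx]. apply Hx. lia.
Qed.

Lemma irreducible_mem_bigcup (S : (P -> Prop) -> Prop) (C : sigmaP P -> Prop) :
  is_subbase P (scott_open P (@le P)) S -> (forall A, S A -> countable_set P A) ->
  irreducible_closed _ sigma_open C -> C (sigma_bigcup C).
Proof.
  intros HS HSc HC.
  destruct (classic (exists V, C V /\ forall x, proj1_sig V x)) as [[V [CV Vfull]] | Hnfull].
  - apply (scott_closed_lower _ _ C (proj1 HC) _ V); [intros x _; apply Vfull | exact CV].
  - set (W := sigma_bigcup C).
    apply (scott_closed_directed_sup _ _ C _ W (proj1 HC) (sigma_countable_below_directed W)).
    + apply is_sup_sigma. intro x. split.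
      * intro Wx. pose proof Wx as [V [CV Vx]].
        destruct (subbase_covers_point _ _ S (proj1_sig V) x HS (proj2_sig V) Vx)
          as [A [SA Ax]].
        { intro Vfull. apply Hnfull. exists V. auto. }
        destruct (countable_open_nbhd _ _ S A (proj1_sig W) x HS HSc SA Ax (proj2_sig W) Wx)
          as [U [HU [CU [Ux HUW]]]].
        exists (exist _ U HU). split; [split; assumption | exact Ux].
      * intros [U [[HUW _] Ux]]. exact (HUW x Ux).
    + intros U [HUW CU]. apply (irreducible_mem_of_countable C U HC CU).
      intros x Ux. exact (HUW x Ux).
Qed.

End ScottOpenSets.

Theorem corollary4p9 (P : poset) :
  @omega_type (carrier P) (@scott_open (carrier P) (@le P)) ->
  @sober (sigmaP P) (@scott_open (sigmaP P) (@sigma_le P)).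
Proof.
  intros [S [HS HSc]].
  apply (scott_sober_of_greatest (sigma_poset P)).
  intros C HC. exists (sigma_bigcup P C). split.
  - exact (irreducible_mem_bigcup P S C HS HSc HC).
  - intros U CU x Ux. exists U. split; assumption.
Qed.
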